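(* Let $S$ be a commutative ring, $X=\begin{pmatrix}a&b\\c&a\end{pmatrix}\in R=\mathbb{M}_2(S)$, and assume $bS+cS=rS$ for some $r\in S$. Then $$\{-\det[X,Y]: Y\in R\}=V[r^2,-bc].$$ If $b,c$ are coprime in $S$ (i.e. $bS+cS=S$), this set equals $V[1,-bc]$.
   Context: $[X,Y]=XY-YX$. For $s,\delta\in S$, $V[s,\delta]=\{s r_1^2+\delta r_2^2 : r_1,r_2\in S\}$. *)

From HB Require Import structures.
From mathcomp Require Import all_boot all_order all_algebra.
Set Implicit Arguments. Unset Strict Implicit. Unset Printing Implicit Defensive.
Import GRing.Theory.
Local Open Scope ring_scope.

Definition mx2 (S : comNzRingType) (p q u v : S) : 'M[S]_2 :=
  \matrix_(i < 2, j < 2)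
    (if (i == 0 :> nat) then (if (j == 0 :> nat) then p else q)
     else (if (j == 0 :> nat) then u else v)).

Definition commx (S : comNzRingType) (X Y : 'M[S]_2) : 'M[S]_2 :=
  X *m Y - Y *m X.

Definition Vset (S : comNzRingType) (s d : S) (z : S) : Prop :=
  exists r1 r2 : S, z = s * r1 ^+ 2 + d * r2 ^+ 2.

(* For X = [[a, b], [c, a]] and Y = [[x, y], [z, w]], the commutator [X, Y] is
   [[u, b v], [-c v, -u]] with u = b z - c y and v = w - x, so
   -det [X, Y] = u^2 - b c v^2.  As Y varies, v ranges over S and u over the
   ideal bS + cS = rS, whence the values u^2 - bc v^2 are exactly the
   r^2 t^2 - bc v^2.  When bS + cS = S the generator r is a unit, and scaling
   by the square of a unit does not change V[1, -bc]. *)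

From mathcomp Require Import all_boot all_order all_algebra.
From mathcomp Require Import ring.
Import GRing.Theory.
Local Open Scope ring_scope.

Section TwoByTwo.
Variable S : comNzRingType.
Implicit Types (p q u v : S) (A : 'M[S]_2).

Lemma mx2_eta A : A = mx2 (A 0 0) (A 0 1) (A 1 0) (A 1 1).
Proof.
by apply/matrixP => -[[|[|//]] ?] [[|[|//]] ?]; rewrite !mxE /=;
  congr (A _ _); apply: val_inj.
Qed.

Lemma subr_mx2 p q u v (p' q' u' v' : S) :
  mx2 p q u v - mx2 p' q' u' v' = mx2 (p - p') (q - q') (u - u') (v - v').
Proof.
by apply/matrixP => -[[|[|//]] ?] [[|[|//]] ?]; rewrite !mxE.
Qed.

Lemma mulmx_mx2 p q u v (p' q' u' v' : S) :
  mx2 p q u v *m mx2 p' q' u' v'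
  = mx2 (p * p' + q * u') (p * q' + q * v') (u * p' + v * u') (u * q' + v * v').
Proof.
apply/matrixP => -[[|[|//]] ?] [[|[|//]] ?];
  by rewrite !mxE !big_ord_recl big_ord0 !mxE /= addr0.
Qed.

Lemma det_mx2 p q u v : \det (mx2 p q u v) = p * v - q * u.
Proof.
rewrite (expand_det_row _ 0) !big_ord_recl big_ord0 /cofactor !det_mx11 !mxE /=.
by rewrite expr0 expr1 mul1r mulN1r addr0 mulrN.
Qed.

Lemma oppr_det_commx_mx2 (a b c x y z w : S) :
  - \det (commx (mx2 a b c a) (mx2 x y z w))
  = (b * z - c * y) ^+ 2 + - (b * c) * (w - x) ^+ 2.
Proof. by rewrite /commx !mulmx_mx2 subr_mx2 det_mx2; ring. Qed.

Lemma oppr_det_commxP (a b c z : S) :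
  (exists Y : 'M[S]_2, z = - \det (commx (mx2 a b c a) Y)) <->
  (exists e f v, z = (b * e + c * f) ^+ 2 + - (b * c) * v ^+ 2).
Proof.
split.
- move=> [Y ->]; rewrite [Y]mx2_eta oppr_det_commx_mx2.
  by exists (Y 1 0), (- Y 0 1), (Y 1 1 - Y 0 0); rewrite mulrN.
- move=> [e [f [v ->]]]; exists (mx2 0 (- f) e v).
  by rewrite oppr_det_commx_mx2 subr0 mulrN opprK.
Qed.

Lemma Vset_mul_sqr (s d r z : S) : Vset (s * r ^+ 2) d z -> Vset s d z.
Proof. by move=> [r1 [r2 ->]]; exists (r * r1), r2; rewrite -mulrA -exprMn. Qed.

Lemma Vset_mul_sqr_unit (s d r z : S) :
  (exists t, r * t = 1) -> Vset (s * r ^+ 2) d z <-> Vset s d z.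
Proof.
move=> [t rt1]; split; first exact: Vset_mul_sqr.
move=> [r1 [r2 ->]]; exists (t * r1), r2.
by rewrite -mulrA -exprMn (mulrA r t) rt1 mul1r.
Qed.

End TwoByTwo.

Theorem proposition5p16 (S : comNzRingType) (a b c r : S)
  (hr : forall z : S, (exists x y : S, z = b * x + c * y) <-> (exists t : S, z = r * t)) :
  (forall z : S,
     (exists Y : 'M[S]_2, z = - \det (commx (mx2 a b c a) Y)) <->
     Vset (r ^+ 2) (- (b * c)) z)
  /\
  ((forall z : S, exists x y : S, z = b * x + c * y) ->
   forall z : S,
     (exists Y : 'M[S]_2, z = - \det (commx (mx2 a b c a) Y)) <->
     Vset 1 (- (b * c)) z).
Proof.
have image_eq_Vset z : (exists Y : 'M[S]_2, z = - \det (commx (mx2 a b c a) Y))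
                       <-> Vset (r ^+ 2) (- (b * c)) z.
  rewrite oppr_det_commxP; split.
  - move=> [e [f [v ->]]].
    have [t ->] : exists t, b * e + c * f = r * t by apply/hr; exists e, f.
    by exists t, v; rewrite exprMn.
  - move=> [t [v ->]].
    have [e [f rtE]] : exists e f, r * t = b * e + c * f by apply/hr; exists t.
    by exists e, f, v; rewrite -rtE exprMn.
split=> // bc_coprime z; rewrite image_eq_Vset -[r ^+ 2]mul1r.
apply: Vset_mul_sqr_unit; have [t rt] := proj1 (hr 1) (bc_coprime 1).
by exists t.
Qed.
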